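(* For every $n\ge1$, the number of permutations $\pi$ of $\{1,\dots,n\}$ whose Schröder insertion tableau $P(\pi)$ consists of a single row is $2^{\lfloor n/2\rfloor}$.
   Context: A Schröder tableau consists of rows $1,2,\dots$; row $r$ has $\lambda_r$ cells at positions $1,\dots,\lambda_r$, each filled with a number. Cells at odd positions are upper triangles, cells at even positions are lower triangles. The Schröder insertion tableau $P(\pi)$ of $\pi=\pi_1\cdots\pi_n$ is built as follows. Start with $P$ having one row containing $\pi_1$. For $k=2,\dots,n$, insert $\alpha=\pi_k$ into row $i=1$ by the rule: if row $i$ is empty or $\alpha$ is larger than all its entries, place $\alpha$ in a new cell at the end of row $i$ and stop. Otherwise let $j$ be the position in row $i$ of the smallest entry larger than $\alpha$. If $j$ is even: remove the entry $\beta$ at position $j$, write $\alpha$ there, and insert $\beta$ into row $i+1$ by the same rule. If $j$ is odd and position $j+1$ exists in row $i$ with entry $\beta$: move the entry of position $j$ to position $j+1$, write $\alpha$ at position $j$, and insert $\beta$ into row $i+1$. If $j$ is odd and is the last position of row $i$: move the entry of position $j$ into a new cell at position $j+1$ at the end of row $i$, write $\alpha$ at position $j$, and stop. The final $P$ is $P(\pi)$. *)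

From mathcomp Require Import all_boot all_order all_fingroup.
Set Implicit Arguments. Unset Strict Implicit. Unset Printing Implicit Defensive.

(* A Schroder tableau: a list of rows; a row is a list of entries, and the
   entry stored at list index k (0-based) sits at position k+1.
   Odd positions (even 0-based index) are upper triangles, even positions
   (odd 0-based index) are lower triangles. *)

(* smallest entry of r larger than a (meaningful only if one exists) *)
Definition smallest_larger (r : seq nat) (a : nat) : nat :=
  let s := [seq x <- r | a < x] in foldr minn (head 0 s) s.

Fixpoint sch_insert (P : seq (seq nat)) (a : nat) : seq (seq nat) :=
  match P with
  | [::] => [:: [:: a]]
  | r :: P' =>
      if all (fun x => x < a) r then rcons r a :: P'
      else
        let j0 := index (smallest_larger r a) r in   (* position j = j0 + 1 *)
        if odd j0 then                               (* j even *)
          set_nth 0 r j0 a :: sch_insert P' (nth 0 r j0)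
        else if j0.+1 < size r then                  (* j odd, j+1 exists *)
          set_nth 0 (set_nth 0 r j0.+1 (nth 0 r j0)) j0 a
            :: sch_insert P' (nth 0 r j0.+1)
        else                                         (* j odd, j last *)
          set_nth 0 (rcons r (nth 0 r j0)) j0 a :: P'
  end.

Definition schroderP (w : seq nat) : seq (seq nat) :=
  match w with
  | [::] => [::]
  | x :: w' => foldl sch_insert [:: [:: x]] w'
  end.

(* The one-line word pi_1 ... pi_n of s in 'S_n, viewed as a permutation
   of {1,...,n}: pi_k = s(k-1) + 1. *)
Definition perm_word n (s : 'S_n) : seq nat := [seq (s i).+1 | i <- enum 'I_n].

From mathcomp Require Import all_boot all_order all_fingroup zify.

Set Implicit Arguments.
Unset Strict Implicit.
Unset Printing Implicit Defensive.

(* Inserting a letter a into an increasing row keeps a single row exactly when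
   a is appended, or when the only entry larger than a is the last one and it
   sits at an odd position, so that it is bumped into a new cell.  Hence P(w) is
   a single row iff each letter w_k (positions counted from 0) has at most one
   larger letter before it, and none when k is even; that is, every inversion
   of w is between positions 2m and 2m+1.  For a permutation this means, by a
   pigeonhole argument, that it maps each pair {2m, 2m+1} onto itself, and such
   permutations are chosen by deciding independently, for each of the n/2
   complete pairs, whether to swap it. *)

Lemma foldr_minn_le d s x : x \in s -> foldr minn d s <= x.
Proof.
elim: s => [|y s IHs] //=; rewrite in_cons => /orP [/eqP ->|xs].
  exact: geq_minl.
by rewrite geq_min IHs ?orbT.
Qed.

Lemma foldr_minn_mem d s : foldr minn d s \in d :: s.
Proof.
elim: s => [|y s IHs] /=; first exact: mem_head.
rewrite /minn; case: ifP => _; first by rewrite !in_cons eqxx orbT.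
by move: IHs; rewrite !in_cons => /orP [->|->]; rewrite ?orbT.
Qed.

Lemma smallest_largerP r a : has (fun y => a < y) r ->
  [/\ smallest_larger r a \in r, a < smallest_larger r a &
      forall y, y \in r -> a < y -> smallest_larger r a <= y].
Proof.
move=> /hasP [z zr az]; rewrite /smallest_larger.
set s := [seq x <- r | a < x].
have zs : z \in s by rewrite mem_filter az.
have mem : foldr minn (head 0 s) s \in s.
  case: s zs => [|y s'] //= _.
  have := foldr_minn_mem y (y :: s').
  by rewrite /= in_cons => /predU1P [->|]; rewrite ?mem_head.
move: (mem); rewrite mem_filter => /andP [am mr]; split => // y yr ay.
by apply: foldr_minn_le; rewrite mem_filter ay.
Qed.

Lemma increasing_row_split r a : pairwise ltn r -> a \notin r ->
    ~~ all (fun y => y < a) r ->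
  exists q t, [/\ r = q ++ smallest_larger r a :: t,
                  index (smallest_larger r a) r = size q,
                  all (fun y => y < a) q &
                  all (fun y => a < y) (smallest_larger r a :: t)].
Proof.
move=> incr ar not_lt; have has_a : has (fun y => a < y) r.
  case/allPn: not_lt => y yr /negP ya; apply/hasP; exists y => //.
  have : y != a by apply: contraNneq ar => <-.
  lia.
case/smallest_largerP: has_a; move: (smallest_larger r a) => m mr am mmin.
case/splitPr: mr incr ar mmin => q t.
rewrite pairwise_cat /= => /and4P [/allrelP ltq _ /allP ltt _] ar mmin.
have qa : all (fun y => y < a) q.
  apply/allP => y yq; have ya : y != a by apply: contraNneq ar => <-; rewrite mem_cat yq.
  have := ltq y m yq (mem_head _ _); have := mmin y; rewrite mem_cat yq => /(_ isT); lia.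
have mq : m \notin q by apply: contraTN qa => mq; apply/allPn; exists m => //=; lia.
exists q, t; split => //=; first by rewrite index_cat (negbTE mq) /= eqxx addn0.
by rewrite am; apply/allP => y /ltt /=; lia.
Qed.

Lemma sch_insert_row_size r a : pairwise ltn r -> a \notin r ->
  (size (sch_insert [:: r] a) == 1) = (count (fun y => a < y) r <= odd (size r)).
Proof.
move=> incr ar /=; case: ifPn => [/allP lt_a | not_lt].
  by rewrite (@eq_in_count _ _ pred0) ?count_pred0 // => y /lt_a /=; lia.
have [q [t [Er Ei qa ta]]] := increasing_row_split incr ar not_lt.
rewrite Ei; set m := smallest_larger r a in Er ta *; rewrite Er.
have -> : count (fun y => a < y) (q ++ m :: t) = size (m :: t).
  move/allP: qa => qa; move: ta; rewrite all_count => /eqP <-.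
  by rewrite count_cat (@eq_in_count _ _ pred0) ?count_pred0 // => y /qa /=; lia.
rewrite nth_cat ltnn subnn /= size_cat /=.
case: ifP => qodd /=; first by apply/esym/negbTE; lia.
case: t {Er ta} => [|z t]; first by rewrite /= addn1 ltnn /= qodd.
rewrite /= addnS; have -> : (size q).+1 < (size q + (size t).+1).+1 by lia.
by apply/esym/negbTE; rewrite /=; lia.
Qed.

Lemma set_nth_size_cat (T : Type) (x0 : T) q x s a :
  set_nth x0 (q ++ x :: s) (size q) a = q ++ a :: s.
Proof. by elim: q => [|z q IHq] //=; rewrite IHq. Qed.

Lemma sch_insert_row_single r a r' : pairwise ltn r -> a \notin r ->
  sch_insert [:: r] a = [:: r'] -> pairwise ltn r' /\ perm_eq r' (rcons r a).
Proof.
move=> incr ar /=; case: ifPn => [lt_a [<-] | not_lt].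
  by rewrite pairwise_rcons lt_a incr perm_refl.
have [q [t [Er Ei qa ta]]] := increasing_row_split incr ar not_lt.
rewrite Ei; set m := smallest_larger r a in Er ta *; rewrite Er in incr *.
rewrite nth_cat ltnn subnn /= size_cat /=.
case: ifP => // _; case: t ta incr {Er} => [|z t] /= ta incr; last first.
  by rewrite addnS; have -> : (size q).+1 < (size q + (size t).+1).+1 by lia.
rewrite addn1 ltnn => -[<-]; rewrite -cats1 -catA /= set_nth_size_cat; split.
  move: incr ta; rewrite !pairwise_cat /= !andbT => /andP [_ ->] am.
  rewrite am !andbT; apply/allrelP => x y /(allP qa) xa.
  by rewrite !inE => /orP [] /eqP ->; lia.
by rewrite -cats1 -catA perm_cat2l (perm_catC [:: a]).
Qed.

Definition inversions_at (w : seq nat) (k : nat) : nat :=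
  count (fun y => nth 0 w k < y) (take k w).

Definition one_row_word (w : seq nat) : bool :=
  all (fun k => inversions_at w k <= odd k) (iota 0 (size w)).

Lemma one_row_word_rcons w a : one_row_word (rcons w a) =
  one_row_word w && (count (fun y => a < y) w <= odd (size w)).
Proof.
rewrite /one_row_word size_rcons -addn1 iotaD all_cat /= andbT.
rewrite /inversions_at -cats1 take_size_cat // nth_cat ltnn subnn /=.
congr (_ && _); apply: eq_in_all => k; rewrite mem_iota /= => kw.
by rewrite nth_cat kw takel_cat // ltnW.
Qed.

Lemma size_sch_insert P a : size P <= size (sch_insert P a).
Proof.
elim: P a => [|r P IHP] a //=.
case: ifP => // _; case: ifP => _ /=; first by rewrite ltnS IHP.
by case: ifP => _ //=; rewrite ltnS IHP.
Qed.

Lemma size_schroderP x w : 0 < size (schroderP (x :: w)).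
Proof.
rewrite /=; move: [:: [:: x]] (isT : 0 < size [:: [:: x]]).
elim: w => [|a w IHw] P //= P0.
by apply: IHw; apply: leq_trans P0 (size_sch_insert P a).
Qed.

Lemma schroderP_rcons x w a :
  schroderP (rcons (x :: w) a) = sch_insert (schroderP (x :: w)) a.
Proof. by rewrite /= foldl_rcons. Qed.

Lemma schroderP_one_row w r : uniq w -> schroderP w = [:: r] ->
  pairwise ltn r /\ perm_eq r w.
Proof.
case: w => [|x w] //; elim/last_ind: w r => [|w a IHw] r.
  by move=> _ [<-].
rewrite -rcons_cons rcons_uniq => /andP [aw uw].
rewrite schroderP_rcons => E.
have : size (schroderP (x :: w)) == 1.
  have := size_schroderP x w; have := size_sch_insert (schroderP (x :: w)) a.
  by rewrite E /=; lia.
case Ew: (schroderP (x :: w)) E => [|r0 []] // E _.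
have [incr0 perm0] := IHw r0 uw Ew.
have [|incr perm] := sch_insert_row_single incr0 _ E; first by rewrite (perm_mem perm0).
by split=> //; apply: (perm_trans perm); rewrite -!cats1 perm_cat2r.
Qed.

Lemma schroderP_size1 w : uniq w -> w != [::] ->
  (size (schroderP w) == 1) = one_row_word w.
Proof.
case: w => [|x w] // + _; elim/last_ind: w => [|w a IHw] //.
rewrite -rcons_cons rcons_uniq => /andP [aw uw].
rewrite schroderP_rcons one_row_word_rcons -IHw //.
case Ew: (schroderP (x :: w)) => [|r0 [|r1 P]].
- by have := size_schroderP x w; rewrite Ew.
- have [incr0 perm0] := schroderP_one_row uw Ew.
  rewrite (sch_insert_row_size incr0) ?(perm_mem perm0) //.
  by rewrite (perm_size perm0) (seq.permP perm0).
- rewrite andFb; apply/negbTE.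
  by have := size_sch_insert [:: r0, r1 & P] a; rewrite [size _]/=; lia.
Qed.

Definition inversions_in_pairs (w : seq nat) : Prop :=
  forall i k, i < k < size w -> nth 0 w k < nth 0 w i -> odd k /\ i = k.-1.

Lemma count_take_gt0 (p : pred nat) w i k :
  i < k -> k <= size w -> p (nth 0 w i) -> 0 < count p (take k w).
Proof.
move=> ik kw pi; rewrite -has_count; apply/hasP; exists (nth 0 w i) => //.
by rewrite -(nth_take 0 ik) mem_nth // size_takel.
Qed.

Lemma inversions_at_gt0 w i k : i < k -> k < size w ->
  nth 0 w k < nth 0 w i -> 0 < inversions_at w k.
Proof. by move=> ik kw; apply: count_take_gt0 ik (ltnW kw). Qed.

Lemma inversions_at_S w k : k < size w ->
  inversions_at w k.+1 =
  count (fun y => nth 0 w k.+1 < y) (take k w) + (nth 0 w k.+1 < nth 0 w k).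
Proof. by move=> kw; rewrite /inversions_at (take_nth 0 kw) -cats1 count_cat /= addn0. Qed.

Lemma one_row_word_inversions w : one_row_word w -> inversions_in_pairs w.
Proof.
move=> /allP row i [//|j] /andP [ij jw] lt_ji.
have row_at k : k < size w -> inversions_at w k <= odd k.
  by move=> kw; apply: row; rewrite mem_iota.
have ok : odd j.+1.
  have := inversions_at_gt0 ij jw lt_ji.
  by have := row_at _ jw; case: (odd _) => //=; lia.
split=> //; apply/eqP; rewrite eqn_leq -ltnS ij /= leqNgt; apply/negP => lt_ij.
(* w_j sits at an even position, so w_i <= w_j and both exceed w_(j+1). *)
have jw' : j < size w by lia.
have le_ij : nth 0 w i <= nth 0 w j.
  rewrite leqNgt; apply/negP => lt_j_i.
  have := inversions_at_gt0 lt_ij jw' lt_j_i.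
  by have := row_at _ jw'; move: ok => /= /negbTE ->; lia.
have := row_at _ jw; rewrite inversions_at_S //.
have := @count_take_gt0 (fun y => nth 0 w j.+1 < y) w i j lt_ij (ltnW jw') lt_ji.
have -> : nth 0 w j.+1 < nth 0 w j by lia.
rewrite ok /=; lia.
Qed.

Lemma inversions_one_row_word w : inversions_in_pairs w -> one_row_word w.
Proof.
move=> inv; apply/allP => -[|k]; rewrite mem_iota /= add0n => kw.
  by rewrite /inversions_at take0.
rewrite (inversions_at_S (ltnW kw)).
have -> : count (fun y => nth 0 w k.+1 < y) (take k w) = 0.
  apply/eqP; rewrite -leqn0 leqNgt -has_count; apply/hasPn => y /(nthP 0) [i].
  rewrite size_takel ?(ltnW (ltnW kw)) // => ik <-; rewrite nth_take //.
  by apply/negP => /(inv i k.+1); rewrite ltnS (ltnW ik) kw => /(_ isT) [_ ie]; lia.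
rewrite add0n; case: (boolP (nth 0 w k.+1 < nth 0 w k)) => [lt_k|_] //.
by have [|ok _] := inv k k.+1 _ lt_k; rewrite ?ltnSn //; move: ok => /= ->.
Qed.

Lemma one_row_wordP w : reflect (inversions_in_pairs w) (one_row_word w).
Proof. exact: (iffP idP) (@one_row_word_inversions w) (@inversions_one_row_word w). Qed.

Lemma card_ord_lt n m : m <= n -> #|[set i : 'I_n | i < m]| = m.
Proof.
move=> mn; have winj : injective (widen_ord mn) by move=> i j [] /val_inj.
rewrite -[RHS](card_ord m) -(card_imset _ winj).
apply: eq_card => i; rewrite inE; apply/idP/imsetP => [im|[j _ ->]].
  by exists (Ordinal im) => //; apply: val_inj.
by rewrite /= ltn_ord.
Qed.

Lemma card_ord_gt n m : m < n -> #|[set i : 'I_n | m < i]| = n - m.+1.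
Proof.
move=> mn; have := cardsC [set i : 'I_n | i < m.+1]; rewrite card_ord_lt // card_ord.
have -> : ~: [set i : 'I_n | i < m.+1] = [set i : 'I_n | m < i].
  by apply/setP => i; rewrite !inE ltnS -ltnNge.
lia.
Qed.

Lemma perm_lower_bound n (s : 'S_n) m (x : 'I_n) : m <= n ->
  (forall i : 'I_n, i < m -> s i < x) -> m <= x.
Proof.
move=> mn lt_x; rewrite -(card_ord_lt mn) -(card_imset _ (@perm_inj _ s)).
rewrite -(card_ord_lt (ltnW (ltn_ord x))); apply: subset_leq_card.
by apply/subsetP => y /imsetP [i]; rewrite inE => /lt_x lt_six ->; rewrite inE.
Qed.

Lemma perm_upper_bound n (s : 'S_n) m (x : 'I_n) :
  (forall j : 'I_n, m < j -> x < s j) -> x <= m.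
Proof.
move=> gt_x; case: (ltnP m n) => mn; last exact: leq_trans (ltnW (ltn_ord x)) mn.
have : #|s @: [set j : 'I_n | m < j]| <= #|[set y : 'I_n | x < y]|.
  apply/subset_leq_card/subsetP => y /imsetP [j].
  by rewrite inE => /gt_x gt_sjx ->; rewrite inE.
rewrite card_imset ?card_ord_gt //; last exact: perm_inj.
have := ltn_ord x; lia.
Qed.

Definition pair_preserving n (s : 'S_n) : bool := [forall i, (s i)./2 == i./2].

Lemma pair_preservingP n (s : 'S_n) :
  reflect (forall i k : 'I_n, i < k -> s k < s i -> odd k /\ (i : nat) = k.-1)
          (pair_preserving s).
Proof.
apply: (iffP forallP) => [pres i k ik lt_ki | inv k].
  by have := eqP (pres i); have := eqP (pres k); lia.
(* No inversion crosses a pair boundary, so s k is trapped in the pair of k. *)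
have s_neq i j : i != j -> (s i : nat) != s j by rewrite val_eqE (inj_eq perm_inj).
have lo : (k./2).*2 <= s k.
  apply: (perm_lower_bound (s := s)) => [|i ik]; first by have := ltn_ord k; lia.
  have /s_neq : i != k by apply: contraTneq ik => ->; lia.
  by case: (ltnP (s i) (s k)) => // le_ki ne_ik; have [] := inv i k _ _; lia.
have hi : s k <= (k./2).*2.+1.
  apply: (perm_upper_bound (s := s)) => j kj.
  have /s_neq : k != j by apply: contraTneq kj => ->; lia.
  by case: (ltnP (s k) (s j)) => // le_jk ne_kj; have [] := inv k j _ _; lia.
apply/eqP; lia.
Qed.

Lemma size_perm_word n (s : 'S_n) : size (perm_word s) = n.
Proof. by rewrite size_map size_enum_ord. Qed.

Lemma nth_perm_word n (s : 'S_n) (i : 'I_n) : nth 0 (perm_word s) i = (s i).+1.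
Proof. by rewrite (nth_map i) ?size_enum_ord // nth_ord_enum. Qed.

Lemma uniq_perm_word n (s : 'S_n) : uniq (perm_word s).
Proof. by rewrite map_inj_uniq ?enum_uniq // => i j /succn_inj /val_inj /perm_inj. Qed.

Lemma perm_word_inversions_in_pairsP n (s : 'S_n) :
  reflect (inversions_in_pairs (perm_word s)) (pair_preserving s).
Proof.
apply: (iffP (pair_preservingP s)); rewrite /inversions_in_pairs size_perm_word => inv.
  move=> i k /andP [ik kn]; have i_lt_n : i < n by lia.
  have := inv (Ordinal i_lt_n) (Ordinal kn) ik.
  by rewrite -[i]/(val (Ordinal i_lt_n)) -[k]/(val (Ordinal kn)) !nth_perm_word.
by move=> i k ik; have := inv i k; rewrite !nth_perm_word ik ltn_ord => /(_ isT).
Qed.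

Definition partner (i : nat) : nat := if odd i then i.-1 else i.+1.

Lemma half_partner i : (partner i)./2 = i./2.
Proof. by rewrite /partner; case: ifP; lia. Qed.

Lemma partnerK : involutive partner.
Proof. by move=> i; rewrite /partner; case oi: (odd i); case: ifP; lia. Qed.

Section PairPreservingCount.

Variable n : nat.

(* For odd n the last position n - 1 forms a block of its own, which is never
   flagged. *)
Definition block_flag (f : {ffun 'I_(n./2) -> bool}) (i : nat) : bool :=
  if insub i./2 is Some b then f b else false.

Lemma block_flag_in f (b : 'I_(n./2)) i : i./2 = b -> block_flag f i = f b.
Proof. by move=> ib; rewrite /block_flag ib valK. Qed.

Lemma block_flag_out f i : n./2 <= i./2 -> block_flag f i = false.
Proof. by move=> ni; rewrite /block_flag insubN // -leqNgt. Qed.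

Definition pair_swap f (i : nat) : nat := if block_flag f i then partner i else i.

Lemma half_pair_swap f i : (pair_swap f i)./2 = i./2.
Proof. by rewrite /pair_swap; case: ifP; rewrite ?half_partner. Qed.

Lemma pair_swapK f : involutive (pair_swap f).
Proof.
move=> i; have flag : block_flag f (pair_swap f i) = block_flag f i.
  by rewrite /block_flag half_pair_swap.
by rewrite {1}/pair_swap flag /pair_swap; case: (block_flag f i); rewrite ?partnerK.
Qed.

Lemma pair_swap_lt f i : i < n -> pair_swap f i < n.
Proof.
rewrite /pair_swap; case: (leqP n./2 i./2) => [/(block_flag_out f) -> //|lt_i].
by case: ifP => // _; rewrite /partner; case: ifP; lia.
Qed.

Lemma double_ord_lt (b : 'I_(n./2)) : b.*2 < n.
Proof. by have := ltn_ord b; lia. Qed.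

Definition ord_double (b : 'I_(n./2)) : 'I_n := Ordinal (double_ord_lt b).

Definition pair_swap_ord f (i : 'I_n) : 'I_n := Ordinal (pair_swap_lt f (ltn_ord i)).

Lemma pair_swap_ordK f : involutive (pair_swap_ord f).
Proof. by move=> i; apply: val_inj; rewrite /= pair_swapK. Qed.

Definition pair_swap_perm f : 'S_n := perm (inv_inj (pair_swap_ordK f)).

Lemma pair_swap_perm_inj : injective pair_swap_perm.
Proof.
move=> f g /permP fg; apply/ffunP => b.
have := congr1 val (fg (ord_double b)); rewrite !permE /= /pair_swap.
rewrite !(block_flag_in _ (b := b)) ?doubleK // /partner odd_double.
by case: (f b); case: (g b) => //=; lia.
Qed.

Lemma pair_preserving_swap (s : 'S_n) : pair_preserving s ->
  s = pair_swap_perm [ffun b => s (ord_double b) != ord_double b].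
Proof.
move=> /forallP pres; have half_s j : (s j)./2 = j./2 := eqP (pres j).
apply/permP => i; apply: val_inj; rewrite permE /= /pair_swap.
have := half_s i; have := ltn_ord (s i); have := ltn_ord i.
case: (leqP n./2 i./2) => [out|lt_i]; first by rewrite block_flag_out //; lia.
set b := Ordinal lt_i; rewrite (block_flag_in _ (b := b)) // ffunE -val_eqE /partner /=.
set j := ord_double b; have jv : (j : nat) = (i./2).*2 by [].
clearbody j.
have := half_s j; case: (eqVneq i j) => [eij | ne_ij].
  by rewrite -eij in jv *; case: ifP => ne; try case: ifP; lia.
have : (s i : nat) != s j by rewrite val_eqE (inj_eq perm_inj).
have : (i : nat) != j by [].
by case: ifP => ne; try case: ifP; lia.
Qed.

Lemma card_pair_preserving :
  #|[set s : 'S_n | pair_preserving s]| = 2 ^ n./2.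
Proof.
have -> : [set s : 'S_n | pair_preserving s] = pair_swap_perm @: setT.
  apply/setP => s; rewrite inE; apply/idP/imsetP => [/pair_preserving_swap -> | [f _ ->]].
    by exists [ffun b => s (ord_double b) != ord_double b].
  by apply/forallP => i; rewrite permE /= half_pair_swap.
by rewrite card_imset ?cardsT ?card_ffun ?card_bool ?card_ord //; exact: pair_swap_perm_inj.
Qed.

End PairPreservingCount.

Theorem mainTheorem8 (n : nat) : 1 <= n ->
  #|[set s : 'S_n | size (schroderP (perm_word s)) == 1]| = 2 ^ (n./2).
Proof.
move=> n_gt0; rewrite -card_pair_preserving; apply: eq_card => s; rewrite !inE.
have word_nil : perm_word s != [::] by rewrite -size_eq0 size_perm_word -lt0n.
rewrite schroderP_size1 ?uniq_perm_word //.
exact: sameP (one_row_wordP _) (perm_word_inversions_in_pairsP s).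
Qed.
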